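(* Let $t$ be a term with $\vdash t:A$ in the sub-affine type system for $\lambda_{\text{coin}}$. If $t$ reduces to the distribution $D_1$ and $t$ reduces to the distribution $D_2$, then $D_1\equiv D_2$ (computational equivalence).
   Context: Terms of $\lambda_{\text{coin}}$: $t ::= x \mid \lambda x.t \mid t\,t \mid 1 \mid 0 \mid \mathsf{if}\ t\ \mathsf{then}\ t\ \mathsf{else}\ t \mid \mathsf{coin}$. One-step probabilistic reduction $t\to_p r$: base rules $(\lambda x.t)r \to_1 t[r/x]$, $\mathsf{if}\ 1\ \mathsf{then}\ t\ \mathsf{else}\ u \to_1 t$, $\mathsf{if}\ 0\ \mathsf{then}\ t\ \mathsf{else}\ u \to_1 u$, $\mathsf{coin}\to_{1/2}1$, $\mathsf{coin}\to_{1/2}0$, closed under all contexts (under $\lambda$, both sides of an application, and all three positions of an if-then-else). We write $t\to^*_{q} r$ if $t\to_{p_1}\cdots\to_{p_n} r$ with $q=\prod_i p_i$. A distribution of terms is a finite list $[(p_i,t_i)]_i$; reduction is lifted to distributions by choosing a redex in a term $t$ with one-step reducts $t\to_{q_j}t'_j$ ($\sum_j q_j=1$) and replacing $(p,t)$ by the entries $(pq_j,t'_j)$; a term $t$ reduces to $D$ if $D$ is obtained from $[(1,t)]$ by finitely many such steps. Equality $\sim$ of distributions means they assign the same total probability to each term. Types: $A ::= \mathbb{B} \mid A\to A$. Sub-affine type system (contexts written as $\Gamma,\Delta$ are required to be disjoint): $\Gamma,x:A\vdash x:A$; from $\Gamma,x:A\vdash t:B$ infer $\Gamma\vdash\lambda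 x.t:A\to B$; from $\Gamma\vdash t:A\to B$ and $\Delta\vdash r:A$ infer $\Gamma,\Delta\vdash tr:B$; $\Gamma\vdash 1:\mathbb{B}$, $\Gamma\vdash 0:\mathbb{B}$, $\Gamma\vdash\mathsf{coin}:\mathbb{B}$; from $\Gamma\vdash t:\mathbb{B}$, $\Delta\vdash u:A$, $\Delta\vdash v:A$ infer $\Gamma,\Delta\vdash \mathsf{if}\ t\ \mathsf{then}\ u\ \mathsf{else}\ v:A$ (the two branches share the same context). Elimination contexts: $C ::= \lozenge \mid C\,v$ where $v$ ranges over closed terms in normal form; $C\langle t\rangle$ denotes $C[t/\lozenge]$. $C$ is an elimination context of type $A$, written $C^A$, if for every $t$ with $\vdash t:A$ we have $\vdash C\langle t\rangle:\mathbb{B}$. Computational equivalence: for distributions $D_1=[(p_i,t_i)]_i$ and $D_2=[(q_j,r_j)]_j$ of closed terms of type $A$, $D_1\equiv D_2$ if for every $C^A$, reducing we get $C\langle t_i\rangle\to^*_{u_{ik}} b_{ik}$ and $C\langle r_j\rangle\to^*_{s_{jh}} c_{jh}$ with all $b_{ik},c_{jh}$ in normal form (the $[(u_{ik},b_{ik})]_k$ forming a reduction of $C\langle t_i\rangle$ to a distribution of normal forms, and likewise for $C\langle r_j\rangle$), such that $[(p_iu_{ik},b_{ik})]_{ik}\sim[(q_js_{jh},c_{jh})]_{jh}$. *)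

From Stdlib Require Import Reals List Arith.
Import ListNotations.
Open Scope R_scope.

Inductive tm : Type :=
| tvar (n : nat)
| tlam (t : tm)
| tapp (t u : tm)
| tone
| tzero
| tite (b t u : tm)
| tcoin.

Definition tm_eq_dec (x y : tm) : {x = y} + {x <> y}.
Proof. decide equality; apply Nat.eq_dec. Defined.

Fixpoint shift (c : nat) (t : tm) : tm :=
  match t with
  | tvar n => if Nat.ltb n c then tvar n else tvar (S n)
  | tlam t => tlam (shift (S c) t)
  | tapp t u => tapp (shift c t) (shift c u)
  | tone => tone
  | tzero => tzero
  | tite b t u => tite (shift c b) (shift c t) (shift c u)
  | tcoin => tcoin
  end.

(* subst k r t = t[r/k], removing variable k (capture-avoiding) *)
Fixpoint subst (k : nat) (r : tm) (t : tm) : tm :=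
  match t with
  | tvar n => if Nat.eqb n k then r
              else if Nat.ltb k n then tvar (pred n) else tvar n
  | tlam t => tlam (subst (S k) (shift 0 r) t)
  | tapp t u => tapp (subst k r t) (subst k r u)
  | tone => tone
  | tzero => tzero
  | tite b t u => tite (subst k r b) (subst k r t) (subst k r u)
  | tcoin => tcoin
  end.

(* ---------- One redex step: a term with the list of all its reducts
   (with probabilities) obtained by contracting one chosen redex. ---------- *)
Definition distr : Type := list (R * tm).

Definition map_tm (f : tm -> tm) (L : distr) : distr :=
  map (fun pt => (fst pt, f (snd pt))) L.

Inductive rstep : tm -> distr -> Prop :=
| rs_beta t r : rstep (tapp (tlam t) r) [(1, subst 0 r t)]
| rs_if1 t u : rstep (tite tone t u) [(1, t)]
| rs_if0 t u : rstep (tite tzero t u) [(1, u)]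
| rs_coin : rstep tcoin [(/2, tone); (/2, tzero)]
| rs_lam t L : rstep t L -> rstep (tlam t) (map_tm tlam L)
| rs_appl t u L : rstep t L -> rstep (tapp t u) (map_tm (fun t' => tapp t' u) L)
| rs_appr t u L : rstep u L -> rstep (tapp t u) (map_tm (fun u' => tapp t u') L)
| rs_ite1 b t u L : rstep b L -> rstep (tite b t u) (map_tm (fun b' => tite b' t u) L)
| rs_ite2 b t u L : rstep t L -> rstep (tite b t u) (map_tm (fun t' => tite b t' u) L)
| rs_ite3 b t u L : rstep u L -> rstep (tite b t u) (map_tm (fun u' => tite b t u') L).

Definition step (t : tm) (p : R) (r : tm) : Prop :=
  exists L, rstep t L /\ In (p, r) L.

Definition normal (t : tm) : Prop := forall p r, ~ step t p r.

Inductive dstep : distr -> distr -> Prop :=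
| ds_intro D1 D2 p t L :
    rstep t L ->
    dstep (D1 ++ (p, t) :: D2)
          (D1 ++ map (fun qt => (p * fst qt, snd qt)) L ++ D2).

Inductive dstar : distr -> distr -> Prop :=
| dstar_refl D : dstar D D
| dstar_step D D' D'' : dstep D D' -> dstar D' D'' -> dstar D D''.

Definition reduces (t : tm) (D : distr) : Prop := dstar [(1, t)] D.

Fixpoint mass (D : distr) (s : tm) : R :=
  match D with
  | [] => 0
  | (p, t) :: D' => (if tm_eq_dec t s then p else 0) + mass D' s
  end.

Definition dist_sim (D1 D2 : distr) : Prop := forall s, mass D1 s = mass D2 s.

Inductive ty : Type :=
| TBool
| TArr (A B : ty).

Definition ctx : Type := list (option ty).

(* G is the disjoint union of G1 and G2 *)
Inductive ctx_split : ctx -> ctx -> ctx -> Prop :=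
| sp_nil : ctx_split [] [] []
| sp_none G G1 G2 : ctx_split G G1 G2 -> ctx_split (None :: G) (None :: G1) (None :: G2)
| sp_left A G G1 G2 : ctx_split G G1 G2 -> ctx_split (Some A :: G) (Some A :: G1) (None :: G2)
| sp_right A G G1 G2 : ctx_split G G1 G2 -> ctx_split (Some A :: G) (None :: G1) (Some A :: G2).

Inductive has_type : ctx -> tm -> ty -> Prop :=
| ht_var G n A : nth_error G n = Some (Some A) -> has_type G (tvar n) A
| ht_lam G t A B : has_type (Some A :: G) t B -> has_type G (tlam t) (TArr A B)
| ht_app G G1 G2 t r A B :
    ctx_split G G1 G2 -> has_type G1 t (TArr A B) -> has_type G2 r A ->
    has_type G (tapp t r) B
| ht_one G : has_type G tone TBool
| ht_zero G : has_type G tzero TBool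
| ht_coin G : has_type G tcoin TBool
| ht_ite G G1 G2 b u v A :
    ctx_split G G1 G2 -> has_type G1 b TBool -> has_type G2 u A -> has_type G2 v A ->
    has_type G (tite b u v) A.

Fixpoint closed_at (k : nat) (t : tm) : Prop :=
  match t with
  | tvar n => (n < k)%nat
  | tlam t => closed_at (S k) t
  | tapp t u => closed_at k t /\ closed_at k u
  | tone | tzero | tcoin => True
  | tite b t u => closed_at k b /\ closed_at k t /\ closed_at k u
  end.

(* C = (... ((hole v1) v2) ... vn) represented by [v1; ...; vn] *)
Definition ectx : Type := list tm.
Definition plug (C : ectx) (t : tm) : tm := fold_left tapp C t.

Definition elim_ctx_of (A : ty) (C : ectx) : Prop :=
  Forall (fun v => closed_at 0 v /\ normal v) C /\
  (forall t, has_type [] t A -> has_type [] (plug C t) TBool).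

Inductive nf_expand (C : ectx) : distr -> distr -> Prop :=
| nfe_nil : nf_expand C [] []
| nfe_cons p t D N E :
    reduces (plug C t) N ->
    Forall (fun bt => normal (snd bt)) N ->
    nf_expand C D E ->
    nf_expand C ((p, t) :: D) (map (fun ub => (p * fst ub, snd ub)) N ++ E).

Definition comp_equiv (A : ty) (D1 D2 : distr) : Prop :=
  Forall (fun pt => has_type [] (snd pt) A) D1 /\
  Forall (fun pt => has_type [] (snd pt) A) D2 /\
  forall C, elim_ctx_of A C ->
    exists E1 E2, nf_expand C D1 E1 /\ nf_expand C D2 E2 /\ dist_sim E1 E2.

(* Interpret every type as an affine space: a boolean as the real probability of
   being [tone], an arrow as the affine maps.  Since the type system is sub-affine,
   a free variable lives in only one side of an application or conditional, so the
   denotation of a typed term is affine in each of its variables.  This makes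
   denotations stable under substitution, and every reduction step splits the
   denotation of the redex into the probability-weighted combination of those of
   its reducts; the expected denotation of a distribution is therefore invariant
   under reduction.  Sub-affinity also bounds the weight of a beta-reduct, so
   closed booleans normalize to [tone] or [tzero].  For an elimination context [C],
   any normal-form expansion of [C<D>] with [t -> D] thus gives [tone] the
   denotation of [C<t>] as mass and [tzero] the rest, so the two expansions agree. *)

From Stdlib Require Import Reals List.
From Stdlib Require Import Lia Lra FunctionalExtensionality ProofIrrelevance Eqdep_dec.
Import ListNotations.
Open Scope R_scope.

Notation scale p L := (map (fun qt : R * tm => (p * fst qt, snd qt)) L).

Lemma dstep_app_r D D' E : dstep D D' -> dstep (D ++ E) (D' ++ E).
Proof. intros [D1 D2 p t L HL]. rewrite <- !app_assoc. simpl. now constructor. Qed.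

Lemma dstep_app_l D D' E : dstep D D' -> dstep (E ++ D) (E ++ D').
Proof. intros [D1 D2 p t L HL]. rewrite !(app_assoc E D1). now constructor. Qed.

Lemma dstep_scale p D D' : dstep D D' -> dstep (scale p D) (scale p D').
Proof.
  intros [D1 D2 q t L HL]. rewrite !map_app, map_map. simpl.
  replace (map _ L) with (scale (p * q) L).
  - now constructor.
  - apply map_ext. intros [a b]. simpl. f_equal. ring.
Qed.

Lemma rstep_plug C t L : rstep t L -> rstep (plug C t) (map_tm (plug C) L).
Proof.
  revert t L; induction C as [|v C IH]; intros t L H.
  - unfold map_tm, plug. simpl. erewrite map_ext, map_id; [exact H | now intros []].
  - replace (map_tm (plug (v :: C)) L) with (map_tm (plug C) (map_tm (fun t' => tapp t' v) L)).
    + apply IH. now constructor.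
    + unfold map_tm. now rewrite map_map.
Qed.

Lemma dstep_plug C D D' : dstep D D' -> dstep (map_tm (plug C) D) (map_tm (plug C) D').
Proof.
  intros [D1 D2 p t L HL]. unfold map_tm. rewrite !map_app, map_map. simpl.
  replace (map _ L) with (scale p (map_tm (plug C) L)).
  - constructor. now apply rstep_plug.
  - unfold map_tm. now rewrite map_map.
Qed.

Lemma dstar_trans D D' D'' : dstar D D' -> dstar D' D'' -> dstar D D''.
Proof. induction 1; intros; auto. econstructor; eauto. Qed.

Lemma dstar_lift (F : distr -> distr) :
  (forall D D', dstep D D' -> dstep (F D) (F D')) ->
  forall D D', dstar D D' -> dstar (F D) (F D').
Proof. intros HF D D' H. induction H; econstructor; eauto. Qed.

Lemma dstar_app D D' E E' : dstar D D' -> dstar E E' -> dstar (D ++ E) (D' ++ E').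
Proof.
  intros HD HE. apply dstar_trans with (D' ++ E).
  - exact (dstar_lift (fun X => X ++ E) (fun X Y => dstep_app_r X Y E) _ _ HD).
  - exact (dstar_lift (fun X => D' ++ X) (fun X Y => dstep_app_l X Y D') _ _ HE).
Qed.

Lemma dstar_scale p D D' : dstar D D' -> dstar (scale p D) (scale p D').
Proof. apply (dstar_lift (fun X => scale p X)), dstep_scale. Qed.

Lemma dstar_plug C D D' : dstar D D' -> dstar (map_tm (plug C) D) (map_tm (plug C) D').
Proof. apply (dstar_lift (map_tm (plug C))), dstep_plug. Qed.

Lemma dstar_pointwise (Q : tm -> Prop) D :
  Forall (fun pt => exists N, reduces (snd pt) N /\ Forall (fun qt => Q (snd qt)) N) D ->
  exists E, dstar D E /\ Forall (fun qt => Q (snd qt)) E.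
Proof.
  induction D as [|[p t] D IH]; intros HF.
  - exists []. split; constructor.
  - inversion HF as [|? ? [N [HN HQ]] HD]; subst.
    destruct (IH HD) as [E [HE HQE]].
    exists (scale p N ++ E). split.
    + replace ((p, t) :: D) with (scale p [(1, t)] ++ D) by (simpl; now rewrite Rmult_1_r).
      apply dstar_app; auto. now apply dstar_scale.
    + apply Forall_app; split; auto. apply Forall_map. now apply Forall_impl with (2 := HQ).
Qed.

Fixpoint total (D : distr) : R :=
  match D with [] => 0 | (p, _) :: D => p + total D end.

Lemma total_app D E : total (D ++ E) = total D + total E.
Proof. induction D as [|[a b] D IH]; simpl; [ring | rewrite IH; ring]. Qed.

Lemma total_map_tm f L : total (map_tm f L) = total L.
Proof. induction L as [|[a b] L IH]; simpl; congruence. Qed.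

Lemma total_scale p L : total (scale p L) = p * total L.
Proof. induction L as [|[a b] L IH]; simpl; [ring | rewrite IH; ring]. Qed.

Lemma total_rstep t L : rstep t L -> total L = 1.
Proof. induction 1; simpl; rewrite ?total_map_tm; auto; lra. Qed.

Lemma total_dstar D D' : dstar D D' -> total D' = total D.
Proof.
  induction 1 as [|D D' D'' [D1 D2 p t L HL] _ IH]; auto.
  rewrite IH, !total_app. simpl. rewrite total_scale, (total_rstep _ _ HL). ring.
Qed.

Section Contexts.
Local Open Scope nat_scope.

Lemma split_length G G1 G2 : ctx_split G G1 G2 -> length G1 = length G /\ length G2 = length G.
Proof. induction 1; simpl; lia. Qed.

Lemma split_sym G G1 G2 : ctx_split G G1 G2 -> ctx_split G G2 G1.
Proof. induction 1; constructor; auto. Qed.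

Lemma split_nth_l G G1 G2 n A : ctx_split G G1 G2 -> nth_error G1 n = Some (Some A) ->
  nth_error G n = Some (Some A) /\ nth_error G2 n = Some None.
Proof.
  intros H; revert n; induction H; intros [|n] Hn; simpl in *; try discriminate; auto;
  inversion Hn; subst; auto.
Qed.

Lemma split_nth_r G G1 G2 n A : ctx_split G G1 G2 -> nth_error G2 n = Some (Some A) ->
  nth_error G n = Some (Some A) /\ nth_error G1 n = Some None.
Proof. intros H; apply split_nth_l, split_sym, H. Qed.

Lemma split_nth_inv G G1 G2 n A : ctx_split G G1 G2 -> nth_error G n = Some (Some A) ->
  (nth_error G1 n = Some (Some A) /\ nth_error G2 n = Some None) \/
  (nth_error G2 n = Some (Some A) /\ nth_error G1 n = Some None).
Proof.
  intros H; revert n; induction H; intros [|n] Hn; simpl in *; try discriminate; auto;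
  inversion Hn; subst; auto.
Qed.

Lemma split_assoc G G1 G2 G11 G12 : ctx_split G G1 G2 -> ctx_split G1 G11 G12 ->
  exists G', ctx_split G G' G12 /\ ctx_split G' G11 G2.
Proof.
  intros H; revert G11 G12; induction H; intros G11 G12 H1; inversion H1; subst;
  try (exists []; split; constructor; fail);
  match goal with Hs : ctx_split _ _ _, IH : forall _ _, ctx_split _ _ _ -> _ |- _ =>
    destruct (IH _ _ Hs) as [X [X1 X2]] end.
  - exists (None :: X); split; constructor; auto.
  - exists (Some A :: X); split; constructor; auto.
  - exists (None :: X); split; constructor; auto.
  - exists (Some A :: X); split; constructor; auto.
Qed.

Fixpoint ctx_ins (k : nat) (o : option ty) (G : ctx) : ctx :=
  match k, G with
  | 0, _ => o :: G
  | S k, [] => [o]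
  | S k, x :: G => x :: ctx_ins k o G
  end.

Lemma nth_ctx_ins k o G n : k <= length G ->
  nth_error (ctx_ins k o G) n =
  if n <? k then nth_error G n else if n =? k then Some o else nth_error G (pred n).
Proof.
  revert G n; induction k; intros G n Hk.
  - now destruct n.
  - destruct G as [|x G]; simpl in Hk; [lia|].
    destruct n; simpl; auto. rewrite IHk by lia.
    destruct (Nat.ltb_spec n k), (Nat.ltb_spec (S n) (S k)), (Nat.eqb_spec n k),
      (Nat.eqb_spec (S n) (S k)); try lia; auto.
    destruct n; simpl; auto. lia.
Qed.

Lemma split_ins_none k G G1 G2 : ctx_split G G1 G2 -> k <= length G ->
  ctx_split (ctx_ins k None G) (ctx_ins k None G1) (ctx_ins k None G2).
Proof.
  revert G G1 G2; induction k; intros G G1 G2 H Hk; simpl.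
  - now constructor.
  - inversion H; subst; simpl in *; try lia; constructor; apply IHk; auto; lia.
Qed.

Lemma split_ins_inv k o G Ga Gb : ctx_split (ctx_ins k o G) Ga Gb -> k <= length G ->
  exists Ha Hb oa ob, Ga = ctx_ins k oa Ha /\ Gb = ctx_ins k ob Hb /\ ctx_split G Ha Hb /\
   ((o = None /\ oa = None /\ ob = None) \/ (exists A, o = Some A /\ oa = Some A /\ ob = None) \/
    (exists A, o = Some A /\ oa = None /\ ob = Some A)).
Proof.
  revert G Ga Gb; induction k; intros G Ga Gb H Hk; simpl in H.
  - inversion H; subst.
    + exists G1, G2, None, None; repeat split; auto.
    + exists G1, G2, (Some A), None; repeat split; eauto 10.
    + exists G1, G2, None, (Some A); repeat split; eauto 10.
  - destruct G as [|x G]; simpl in Hk; [lia|].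
    inversion H; subst; match goal with Hs : ctx_split (ctx_ins _ _ _) _ _ |- _ =>
      destruct (IHk _ _ _ Hs ltac:(lia)) as (Ha & Hb & oa & ob & E1 & E2 & HS & HO) end; subst.
    + exists (None :: Ha), (None :: Hb), oa, ob; repeat split; auto; constructor; auto.
    + exists (Some A :: Ha), (None :: Hb), oa, ob; repeat split; auto; constructor; auto.
    + exists (None :: Ha), (Some A :: Hb), oa, ob; repeat split; auto; constructor; auto.
Qed.

Definition ctx_le (G G' : ctx) : Prop := Forall2 (fun o o' => o = None \/ o = o') G G'.

Lemma ctx_le_nth G G' n A : ctx_le G G' ->
  nth_error G n = Some (Some A) -> nth_error G' n = Some (Some A).
Proof.
  intros H; revert n; induction H as [|o o' G G' Ho]; intros [|n] Hn; simpl in *;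
    try discriminate; auto.
  inversion Hn; subst. destruct Ho; congruence.
Qed.

Lemma ctx_le_refl G : ctx_le G G.
Proof. induction G; constructor; auto. Qed.

Lemma split_ctx_le_r G G1 G2 : ctx_split G G1 G2 -> ctx_le G2 G.
Proof. induction 1; constructor; auto. Qed.

Lemma split_ctx_le G G1 G2 G' : ctx_split G G1 G2 -> ctx_le G G' ->
  exists G1', ctx_split G' G1' G2 /\ ctx_le G1 G1'.
Proof.
  intros H; revert G'; induction H; intros G' HS; inversion HS as [|o o' ? G'' Ho HS']; subst.
  - exists []; split; [constructor | apply ctx_le_refl].
  - destruct (IHctx_split _ HS') as [X [X1 X2]].
    destruct o' as [B|].
    + exists (Some B :: X); split; constructor; auto.
    + exists (None :: X); split; constructor; auto.
  - destruct (IHctx_split _ HS') as [X [X1 X2]].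
    destruct Ho as [Ho|Ho]; [discriminate|subst].
    exists (Some A :: X); split; constructor; auto.
  - destruct (IHctx_split _ HS') as [X [X1 X2]].
    destruct Ho as [Ho|Ho]; [discriminate|subst].
    exists (None :: X); split; constructor; auto.
Qed.

End Contexts.

(** * Weight and progress *)

Section Weight.
Local Open Scope nat_scope.

(* Only one branch of a conditional survives, and [tcoin] steps to a lighter boolean. *)
Fixpoint weight (t : tm) : nat :=
  match t with
  | tvar _ | tone | tzero => 1
  | tcoin => 2
  | tlam t => S (weight t)
  | tapp t u => S (weight t + weight u)
  | tite b u v => S (weight b + Nat.max (weight u) (weight v))
  end.

Fixpoint occ (k : nat) (t : tm) : nat :=
  match t with
  | tvar n => if n =? k then 1 else 0
  | tlam t => occ (S k) t
  | tapp t u => occ k t + occ k u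
  | tone | tzero | tcoin => 0
  | tite b u v => occ k b + Nat.max (occ k u) (occ k v)
  end.

Lemma weight_shift t c : weight (shift c t) = weight t.
Proof. revert c; induction t; intros c; simpl; auto; now destruct (n <? c). Qed.

Lemma weight_subst t k r : weight (subst k r t) <= weight t + occ k t * weight r.
Proof.
  revert k r; induction t; intros k r; simpl.
  - destruct (n =? k); [lia|]. destruct (k <? n); simpl; lia.
  - specialize (IHt (S k) (shift 0 r)). rewrite weight_shift in IHt. lia.
  - specialize (IHt1 k r). specialize (IHt2 k r). lia.
  - lia.
  - lia.
  - specialize (IHt1 k r). specialize (IHt2 k r). specialize (IHt3 k r).
    rewrite Nat.mul_add_distr_r, <- Nat.mul_max_distr_r. lia.
  - lia.
Qed.

Definition bound (G : ctx) (k : nat) : nat :=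
  match nth_error G k with Some (Some _) => 1 | _ => 0 end.

Lemma split_bound G G1 G2 k : ctx_split G G1 G2 -> bound G1 k + bound G2 k <= bound G k.
Proof. unfold bound; intros H; revert k; induction H; intros [|k]; simpl; auto. Qed.

Lemma occ_le_bound G t A : has_type G t A -> forall k, occ k t <= bound G k.
Proof.
  induction 1; intros k; simpl; try lia.
  - destruct (Nat.eqb_spec n k); subst; [unfold bound; rewrite H|]; lia.
  - apply IHhas_type.
  - specialize (split_bound _ _ _ k H). specialize (IHhas_type1 k).
    specialize (IHhas_type2 k). lia.
  - specialize (split_bound _ _ _ k H). specialize (IHhas_type1 k).
    specialize (IHhas_type2 k). specialize (IHhas_type3 k). lia.
Qed.

Lemma weight_beta t r A B : has_type [Some A] t B -> weight (subst 0 r t) < weight (tapp (tlam t) r).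
Proof.
  intros Ht. pose proof (occ_le_bound _ _ _ Ht 0) as Hocc. unfold bound in Hocc; simpl in Hocc.
  pose proof (weight_subst t 0 r). simpl. nia.
Qed.

End Weight.

Definition is_value (t : tm) : Prop :=
  match t with tlam _ | tone | tzero => True | _ => False end.

Lemma Forall_map_tm (P : R * tm -> Prop) f L :
  Forall (fun pt => P (fst pt, f (snd pt))) L -> Forall P (map_tm f L).
Proof. intros H; unfold map_tm; apply Forall_map; auto. Qed.

Lemma progress_weight t A : has_type [] t A ->
  is_value t \/ exists L, rstep t L /\ Forall (fun pt => (weight (snd pt) < weight t)%nat) L.
Proof.
  remember [] as G eqn:EG. induction 1; subst.
  - now destruct n.
  - now left.
  - inversion H; subst. right. destruct (IHhas_type1 eq_refl) as [HV|[L [HL HF]]].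
    + destruct t; simpl in HV; try contradiction; inversion H0; subst.
      exists [(1, subst 0 r t)]. split; [constructor|].
      constructor; [exact (weight_beta _ r _ _ H5) | constructor].
    + exists (map_tm (fun t' => tapp t' r) L). split; [now constructor|].
      apply Forall_map_tm. eapply Forall_impl; [|exact HF]. intros [a b]; simpl; lia.
  - now left.
  - now left.
  - right. exists [(/2, tone); (/2, tzero)]. split; [constructor|]. repeat constructor.
  - inversion H; subst. right. destruct (IHhas_type1 eq_refl) as [HV|[L [HL HF]]].
    + destruct b; simpl in HV; try contradiction; [inversion H0| |].
      * exists [(1, u)]. split; [constructor|]. constructor; [simpl; lia | constructor].
      * exists [(1, v)]. split; [constructor|]. constructor; [simpl; lia | constructor].
    + exists (map_tm (fun b' => tite b' u v) L). split; [now constructor|].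
      apply Forall_map_tm. eapply Forall_impl; [|exact HF]. intros [a b']; simpl; lia.
Qed.

(** * Affine semantics *)

Record aff_space : Type := {
  carrier :> Type;
  mix : R -> carrier -> carrier -> carrier;
  origin : carrier;
  mix_1 : forall x y, mix 1 x y = x;
  mix_0 : forall x y, mix 0 x y = y;
  mix_idem : forall l x, mix l x x = x;
  mix_medial : forall l m a b c d, mix l (mix m a b) (mix m c d) = mix m (mix l a c) (mix l b d);
  mix_mix_weight : forall l p q u v, mix (l * p + (1 - l) * q) u v = mix l (mix p u v) (mix q u v)
}.

Arguments mix {_}.
Arguments origin {_}.

Lemma mix_distr_l (X : aff_space) p l (a b v : X) :
  mix p (mix l a b) v = mix l (mix p a v) (mix p b v).
Proof. rewrite <- (mix_idem X l v) at 1. apply mix_medial. Qed.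

Lemma mix_distr_r (X : aff_space) p l (a b v : X) :
  mix p v (mix l a b) = mix l (mix p v a) (mix p v b).
Proof. rewrite <- (mix_idem X l v) at 1. apply mix_medial. Qed.

Definition R_aff : aff_space.
Proof.
  refine {| carrier := R; mix := fun l x y => l * x + (1 - l) * y; origin := 0 |};
  intros; ring.
Defined.

Definition affine (X Y : aff_space) (f : X -> Y) : Prop :=
  forall l x y, f (mix l x y) = mix l (f x) (f y).

Definition aff_map (X Y : aff_space) : Type := {f : X -> Y | affine X Y f}.

Lemma aff_map_ext X Y (f g : aff_map X Y) : (forall x, proj1_sig f x = proj1_sig g x) -> f = g.
Proof.
  destruct f as [f Hf], g as [g Hg]; simpl; intros E.
  apply functional_extensionality in E; subst. f_equal. apply proof_irrelevance.
Qed.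

Definition aff_map_mix X Y (l : R) (f g : aff_map X Y) : aff_map X Y.
Proof.
  exists (fun x => mix l (proj1_sig f x) (proj1_sig g x)).
  intros m x y. rewrite (proj2_sig f), (proj2_sig g). apply mix_medial.
Defined.

Definition aff_map_const X Y : aff_map X Y.
Proof. exists (fun _ => origin). intros m x y. now rewrite mix_idem. Defined.

Definition aff_fun (X Y : aff_space) : aff_space.
Proof.
  refine {| carrier := aff_map X Y; mix := aff_map_mix X Y; origin := aff_map_const X Y |};
    intros; apply aff_map_ext; intros; simpl.
  - apply mix_1.
  - apply mix_0.
  - apply mix_idem.
  - apply mix_medial.
  - apply mix_mix_weight.
Defined.

(* A boolean denotes the probability of its being [tone]. *)
Fixpoint sem_ty (A : ty) : aff_space :=
  match A with
  | TBool => R_aff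
  | TArr A B => aff_fun (sem_ty A) (sem_ty B)
  end.

Definition appf {A B : ty} (f : sem_ty (TArr A B)) (x : sem_ty A) : sem_ty B := proj1_sig f x.

Lemma appf_affine A B (f : sem_ty (TArr A B)) l x y :
  appf f (mix l x y) = mix l (appf f x) (appf f y).
Proof. apply (proj2_sig f). Qed.

Definition ty_eq_dec (A B : ty) : {A = B} + {A <> B}.
Proof. decide equality. Defined.

Definition Val : Type := {A : ty & sem_ty A}.
Definition Env : Type := nat -> Val.

(* Environments are untyped: a value of the wrong type is read as the origin. *)
Definition val_at (A : ty) (v : Val) : sem_ty A :=
  match ty_eq_dec (projT1 v) A with
  | left e => eq_rect (projT1 v) sem_ty (projT2 v) A e
  | right _ => origin
  end.

Lemma val_at_existT A x : val_at A (existT _ A x) = x.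
Proof.
  unfold val_at; simpl. destruct (ty_eq_dec A A) as [e|n]; [|congruence].
  now rewrite (UIP_dec ty_eq_dec e eq_refl).
Qed.

Definition env_ins (k : nat) (v : Val) (r : Env) : Env :=
  fun n => if (n <? k)%nat then r n else if (n =? k)%nat then v else r (pred n).
Definition env_rem (k : nat) (r : Env) : Env :=
  fun n => if (n <? k)%nat then r n else r (S n).
Definition env_upd (k : nat) (v : Val) (r : Env) : Env :=
  fun n => if (n =? k)%nat then v else r n.
Definition env_cons (v : Val) (r : Env) : Env := env_ins 0 v r.

Lemma env_rem_cons c v r : env_rem (S c) (env_cons v r) = env_cons v (env_rem c r).
Proof.
  apply functional_extensionality; now intros [|n].
Qed.

Lemma env_rem0_cons v r : env_rem 0 (env_cons v r) = r.
Proof. reflexivity. Qed.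

Lemma env_ins_cons k x v r : env_ins (S k) x (env_cons v r) = env_cons v (env_ins k x r).
Proof.
  apply functional_extensionality; intros [|n]; unfold env_cons, env_ins; simpl; auto.
  destruct (Nat.ltb_spec (S n) (S k)), (Nat.ltb_spec n k), (Nat.eqb_spec n k); try lia; auto.
  destruct n; simpl; auto. lia.
Qed.

Lemma env_upd0_cons x v r : env_upd 0 x (env_cons v r) = env_cons x r.
Proof. apply functional_extensionality; now intros [|n]. Qed.

Lemma env_cons_upd v n x r : env_cons v (env_upd n x r) = env_upd (S n) x (env_cons v r).
Proof. apply functional_extensionality; now intros [|m]. Qed.

Lemma env_upd_same n x r : env_upd n x r n = x.
Proof. unfold env_upd. now rewrite Nat.eqb_refl. Qed.

Lemma env_upd_other n m x r : n <> m -> env_upd m x r n = r n.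
Proof. intros H; unfold env_upd. destruct (Nat.eqb_spec n m); congruence. Qed.

Definition lam_ok (A B : ty) (f : Env -> sem_ty B) : Prop :=
  forall r, affine (sem_ty A) (sem_ty B) (fun x => f (env_cons (existT _ A x) r)).

Definition lamv (A B : ty) (f : Env -> sem_ty B) (H : lam_ok A B f) (r : Env) : sem_ty (TArr A B) :=
  exist _ (fun x => f (env_cons (existT _ A x) r)) (H r).

Inductive Sem : ctx -> tm -> forall A : ty, (Env -> sem_ty A) -> Prop :=
| S_var G n A : nth_error G n = Some (Some A) -> Sem G (tvar n) A (fun r => val_at A (r n))
| S_lam G t A B f (H : lam_ok A B f) :
    Sem (Some A :: G) t B f -> Sem G (tlam t) (TArr A B) (lamv A B f H)
| S_app G G1 G2 t u A B f g :
    ctx_split G G1 G2 -> Sem G1 t (TArr A B) f -> Sem G2 u A g ->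
    Sem G (tapp t u) B (fun r => appf (f r) (g r))
| S_one G : Sem G tone TBool (fun _ => 1)
| S_zero G : Sem G tzero TBool (fun _ => 0)
| S_coin G : Sem G tcoin TBool (fun _ => / 2)
| S_ite G G1 G2 b u v A fb fu fv :
    ctx_split G G1 G2 -> Sem G1 b TBool fb -> Sem G2 u A fu -> Sem G2 v A fv ->
    Sem G (tite b u v) A (fun r => mix (fb r) (fu r) (fv r)).

Lemma Sem_ext G t A f f' : Sem G t A f -> (forall r, f r = f' r) -> Sem G t A f'.
Proof. intros H E. replace f' with f; auto. now apply functional_extensionality. Qed.

Lemma Sem_typed G t A f : Sem G t A f -> has_type G t A.
Proof. induction 1; econstructor; eauto. Qed.

Lemma Sem_weak G t A f : Sem G t A f -> forall G', ctx_le G G' -> Sem G' t A f.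
Proof.
  induction 1; intros G' HG.
  - constructor. eapply ctx_le_nth; eauto.
  - constructor. apply IHSem. constructor; auto.
  - destruct (split_ctx_le _ _ _ _ H HG) as [G1' [Hs1 Hs2]]. econstructor; eauto.
  - constructor.
  - constructor.
  - constructor.
  - destruct (split_ctx_le _ _ _ _ H HG) as [G1' [Hs1 Hs2]]. econstructor; eauto.
Qed.

Definition sem_local (G : ctx) {A} (f : Env -> sem_ty A) : Prop :=
  forall r r', (forall n B, nth_error G n = Some (Some B) -> r n = r' n) -> f r = f r'.

Definition sem_affine (G : ctx) {A} (f : Env -> sem_ty A) : Prop :=
  forall n B, nth_error G n = Some (Some B) -> forall r l x y,
    f (env_upd n (existT _ B (mix l x y)) r) =
    mix l (f (env_upd n (existT _ B x) r)) (f (env_upd n (existT _ B y) r)).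

Lemma Sem_local G t A f : Sem G t A f -> sem_local G f.
Proof.
  induction 1; intros r r' E; simpl; auto.
  - now rewrite (E n A H).
  - apply aff_map_ext. intros x. simpl. apply IHSem.
    intros [|m] B' Hm; simpl in Hm; unfold env_cons, env_ins; simpl; eauto.
  - rewrite (IHSem1 r r'), (IHSem2 r r'); auto; intros m B' Hm.
    + apply (E m B'), (split_nth_r _ _ _ _ _ H Hm).
    + apply (E m B'), (split_nth_l _ _ _ _ _ H Hm).
  - rewrite (IHSem1 r r'), (IHSem2 r r'), (IHSem3 r r'); auto; intros m B' Hm.
    + apply (E m B'), (split_nth_r _ _ _ _ _ H Hm).
    + apply (E m B'), (split_nth_r _ _ _ _ _ H Hm).
    + apply (E m B'), (split_nth_l _ _ _ _ _ H Hm).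
Qed.

Lemma sem_local_upd G A (f : Env -> sem_ty A) n x r :
  sem_local G f -> nth_error G n = Some None -> f (env_upd n x r) = f r.
Proof. intros D Hn. apply D. intros m B Hm. apply env_upd_other. intros ->. congruence. Qed.

(* Sub-affinity at work: a variable of an application or a conditional is
   bound in only one of the two sub-contexts, so the other part is constant in it. *)
Lemma Sem_affine G t A f : Sem G t A f -> sem_affine G f.
Proof.
  induction 1; intros m B' Hm r l x y.
  - destruct (Nat.eq_dec n m) as [<-|Hnm].
    + rewrite H in Hm. injection Hm as <-. now rewrite !env_upd_same, !val_at_existT.
    + now rewrite !env_upd_other, mix_idem.
  - apply aff_map_ext. intros v. simpl. rewrite !env_cons_upd. exact (IHSem (S m) B' Hm _ l x y).
  - pose proof (Sem_local _ _ _ _ H0) as L1. pose proof (Sem_local _ _ _ _ H1) as L2.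
    destruct (split_nth_inv _ _ _ _ _ H Hm) as [[Hm1 Hm2]|[Hm2 Hm1]].
    + rewrite !(sem_local_upd _ _ g m _ r L2 Hm2), (IHSem1 m B' Hm1). reflexivity.
    + rewrite !(sem_local_upd _ _ f m _ r L1 Hm1), (IHSem2 m B' Hm2). apply appf_affine.
  - symmetry; apply mix_idem.
  - symmetry; apply mix_idem.
  - symmetry; apply mix_idem.
  - pose proof (Sem_local _ _ _ _ H0) as L1. pose proof (Sem_local _ _ _ _ H1) as L2.
    pose proof (Sem_local _ _ _ _ H2) as L3.
    destruct (split_nth_inv _ _ _ _ _ H Hm) as [[Hm1 Hm2]|[Hm2 Hm1]].
    + rewrite !(sem_local_upd _ _ fu m _ r L2 Hm2), !(sem_local_upd _ _ fv m _ r L3 Hm2).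
      rewrite (IHSem1 m B' Hm1). apply (mix_mix_weight (sem_ty A)).
    + rewrite !(sem_local_upd _ _ fb m _ r L1 Hm1), (IHSem2 m B' Hm2), (IHSem3 m B' Hm2).
      apply mix_medial.
Qed.

Lemma Sem_lam_ok G t A B f : Sem (Some A :: G) t B f -> lam_ok A B f.
Proof.
  intros H r l x y. pose proof (Sem_affine _ _ _ _ H 0%nat A eq_refl (env_cons (existT _ A x) r) l x y) as E.
  now rewrite !env_upd0_cons in E.
Qed.

Lemma Sem_exists G t A : has_type G t A -> exists f, Sem G t A f.
Proof.
  induction 1.
  - eexists; now constructor.
  - destruct IHhas_type as [f Hf]. exists (lamv A B f (Sem_lam_ok _ _ _ _ _ Hf)). now constructor.
  - destruct IHhas_type1 as [f Hf], IHhas_type2 as [g Hg]. eexists; econstructor; eauto.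
  - eexists; constructor.
  - eexists; constructor.
  - eexists; constructor.
  - destruct IHhas_type1 as [f Hf], IHhas_type2 as [g Hg], IHhas_type3 as [h Hh].
    eexists; econstructor; eauto.
Qed.

Lemma Sem_shift G t A f : Sem G t A f -> forall c, (c <= length G)%nat ->
  Sem (ctx_ins c None G) (shift c t) A (fun r => f (env_rem c r)).
Proof.
  induction 1; intros c Hc; simpl.
  - unfold env_rem. destruct (Nat.ltb_spec n c).
    + eapply Sem_ext; [constructor|].
      * rewrite nth_ctx_ins by auto. now destruct (Nat.ltb_spec n c); [|lia].
      * intros r. now destruct (Nat.ltb_spec n c); [|lia].
    + eapply Sem_ext; [constructor|].
      * rewrite nth_ctx_ins by auto.
        now destruct (Nat.ltb_spec (S n) c), (Nat.eqb_spec (S n) c); try lia.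
      * intros r. now destruct (Nat.ltb_spec n c); [lia|].
  - specialize (IHSem (S c) ltac:(simpl; lia)).
    apply (Sem_ext _ _ _ (lamv A B _ (Sem_lam_ok _ _ _ _ _ IHSem))); [now constructor|].
    intros r. apply aff_map_ext. intros v. simpl. now rewrite env_rem_cons.
  - destruct (split_length _ _ _ H) as [L1 L2].
    eapply (S_app _ _ _ _ _ A B (fun r => f (env_rem c r)) (fun r => g (env_rem c r)));
      [apply split_ins_none; [exact H | lia] | apply IHSem1 | apply IHSem2]; lia.
  - constructor.
  - constructor.
  - constructor.
  - destruct (split_length _ _ _ H) as [L1 L2].
    eapply (S_ite _ _ _ _ _ _ A (fun r => fb (env_rem c r)) (fun r => fu (env_rem c r))
      (fun r => fv (env_rem c r)));
      [apply split_ins_none; [exact H | lia] | apply IHSem1 | apply IHSem2 | apply IHSem3]; lia.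
Qed.

Lemma Sem_subst_unused G' t B f : Sem G' t B f -> forall k G u (x : Env -> Val),
  G' = ctx_ins k None G -> (k <= length G)%nat ->
  Sem G (subst k u t) B (fun r => f (env_ins k (x r) r)).
Proof.
  induction 1; intros k G0 w x EG Hk; subst; simpl.
  - rewrite nth_ctx_ins in H by auto. unfold env_ins.
    destruct (Nat.ltb_spec n k), (Nat.eqb_spec n k), (Nat.ltb_spec k n);
      try lia; try discriminate; (eapply Sem_ext; [now constructor | intros r; simpl]).
    + now destruct (Nat.ltb_spec n k); [|lia].
    + now destruct (Nat.ltb_spec (pred n) k), (Nat.eqb_spec (pred n) k); try lia.
  - assert (IH := IHSem (S k) (Some A :: G0) (shift 0 w) (fun r => x (env_rem 0 r))
                    eq_refl ltac:(simpl; lia)).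
    apply (Sem_ext _ _ _ (lamv A B _ (Sem_lam_ok _ _ _ _ _ IH))); [now constructor|].
    intros r. apply aff_map_ext. intros v. simpl. now rewrite env_rem0_cons, env_ins_cons.
  - destruct (split_ins_inv _ _ _ _ _ H Hk) as (Ha & Hb & oa & ob & -> & -> & HS & HO).
    destruct HO as [(_ & -> & ->)|[(? & ? & _)|(? & ? & _)]]; try discriminate.
    destruct (split_length _ _ _ HS) as [La Lb].
    eapply (S_app _ _ _ _ _ A B (fun r => f (env_ins k (x r) r)) (fun r => g (env_ins k (x r) r)));
      [exact HS | apply IHSem1 | apply IHSem2]; auto; lia.
  - constructor.
  - constructor.
  - constructor.
  - destruct (split_ins_inv _ _ _ _ _ H Hk) as (Ha & Hb & oa & ob & -> & -> & HS & HO).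
    destruct HO as [(_ & -> & ->)|[(? & ? & _)|(? & ? & _)]]; try discriminate.
    destruct (split_length _ _ _ HS) as [La Lb].
    eapply (S_ite _ _ _ _ _ _ A (fun r => fb (env_ins k (x r) r)) (fun r => fu (env_ins k (x r) r))
      (fun r => fv (env_ins k (x r) r)));
      [exact HS | apply IHSem1 | apply IHSem2 | apply IHSem3]; auto; lia.
Qed.

Lemma Sem_subst_var k A G1 G2 G n B u g :
  nth_error (ctx_ins k (Some A) G1) n = Some (Some B) -> (k <= length G1)%nat ->
  ctx_split G G1 G2 -> Sem G2 u A g ->
  Sem G (subst k u (tvar n)) B (fun r => val_at B (env_ins k (existT _ A (g r)) r n)).
Proof.
  intros H Hk HS Hu. simpl. rewrite nth_ctx_ins in H by auto. unfold env_ins.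
  destruct (Nat.ltb_spec n k), (Nat.eqb_spec n k), (Nat.ltb_spec k n); try lia.
  - eapply Sem_ext; [constructor; apply (split_nth_l _ _ _ _ _ HS H)|].
    intros r. now destruct (Nat.ltb_spec n k); [|lia].
  - subst. injection H as ->.
    eapply Sem_ext; [apply (Sem_weak _ _ _ _ Hu); eapply split_ctx_le_r; eauto|].
    intros r. now rewrite val_at_existT.
  - eapply Sem_ext; [constructor; apply (split_nth_l _ _ _ _ _ HS H)|].
    intros r. now destruct (Nat.ltb_spec n k), (Nat.eqb_spec n k); try lia.
Qed.

Lemma Sem_subst G' t B f : Sem G' t B f -> forall k A G1 G2 G u g,
  G' = ctx_ins k (Some A) G1 -> (k <= length G1)%nat -> ctx_split G G1 G2 -> Sem G2 u A g ->
  Sem G (subst k u t) B (fun r => f (env_ins k (existT _ A (g r)) r)).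
Proof.
  induction 1; intros k A' G1' G2' G0 w h EG Hk HS Hw; subst.
  - eapply Sem_subst_var; eauto.
  - simpl. assert (IH := IHSem (S k) A' (Some A :: G1') (None :: G2') (Some A :: G0) (shift 0 w)
                   (fun r => h (env_rem 0 r)) eq_refl ltac:(simpl; lia) ltac:(now constructor)
                   (Sem_shift _ _ _ _ Hw 0 ltac:(lia))).
    apply (Sem_ext _ _ _ (lamv A B _ (Sem_lam_ok _ _ _ _ _ IH))); [now constructor|].
    intros r. apply aff_map_ext. intros v. simpl. now rewrite env_rem0_cons, env_ins_cons.
  - destruct (split_ins_inv _ _ _ _ _ H Hk) as (Ha & Hb & oa & ob & -> & -> & HS' & HO).
    destruct (split_length _ _ _ HS') as [La Lb].
    destruct HO as [(? & _)|[(A0 & [=<-] & -> & ->)|(A0 & [=<-] & -> & ->)]]; [discriminate| |].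
    + destruct (split_assoc _ _ _ _ _ HS HS') as [Ga [HGa HGa']].
      eapply (S_app _ _ _ _ _ A B (fun r => f (env_ins k (existT _ A' (h r)) r))
        (fun r => g (env_ins k (existT _ A' (h r)) r)));
        [exact HGa | eapply IHSem1; eauto; lia | eapply Sem_subst_unused; eauto; lia].
    + destruct (split_assoc _ _ _ _ _ HS (split_sym _ _ _ HS')) as [Gb [HGb HGb']].
      eapply (S_app _ _ _ _ _ A B (fun r => f (env_ins k (existT _ A' (h r)) r))
        (fun r => g (env_ins k (existT _ A' (h r)) r)));
        [exact (split_sym _ _ _ HGb) | eapply Sem_subst_unused; eauto; lia | eapply IHSem2; eauto; lia].
  - constructor.
  - constructor.
  - constructor.
  - destruct (split_ins_inv _ _ _ _ _ H Hk) as (Ha & Hb & oa & ob & -> & -> & HS' & HO).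
    destruct (split_length _ _ _ HS') as [La Lb].
    destruct HO as [(? & _)|[(A0 & [=<-] & -> & ->)|(A0 & [=<-] & -> & ->)]]; [discriminate| |].
    + destruct (split_assoc _ _ _ _ _ HS HS') as [Ga [HGa HGa']].
      eapply (S_ite _ _ _ _ _ _ A (fun r => fb (env_ins k (existT _ A' (h r)) r))
        (fun r => fu (env_ins k (existT _ A' (h r)) r)) (fun r => fv (env_ins k (existT _ A' (h r)) r)));
        [exact HGa | eapply IHSem1; eauto; lia | eapply Sem_subst_unused; eauto; lia
        | eapply Sem_subst_unused; eauto; lia].
    + destruct (split_assoc _ _ _ _ _ HS (split_sym _ _ _ HS')) as [Gb [HGb HGb']].
      eapply (S_ite _ _ _ _ _ _ A (fun r => fb (env_ins k (existT _ A' (h r)) r))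
        (fun r => fu (env_ins k (existT _ A' (h r)) r)) (fun r => fv (env_ins k (existT _ A' (h r)) r)));
        [exact (split_sym _ _ _ HGb) | eapply Sem_subst_unused; eauto; lia
        | eapply IHSem2; eauto; lia | eapply IHSem3; eauto; lia].
Qed.

(** * Soundness of reduction *)

Ltac inj_existT := repeat match goal with H : existT _ _ _ = existT _ _ _ |- _ =>
  apply (inj_pair2_eq_dec _ ty_eq_dec) in H end.

Lemma Sem_app_inv G t u B F : Sem G (tapp t u) B F -> exists G1 G2 A f g,
  ctx_split G G1 G2 /\ Sem G1 t (TArr A B) f /\ Sem G2 u A g /\ forall r, F r = appf (f r) (g r).
Proof. inversion 1; subst; inj_existT; subst. exists G1, G2, A, f, g; auto. Qed.

Lemma Sem_lam_inv G t A B F : Sem G (tlam t) (TArr A B) F -> exists f (H : lam_ok A B f),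
  Sem (Some A :: G) t B f /\ forall r, F r = lamv A B f H r.
Proof. inversion 1; subst; inj_existT; subst. eauto. Qed.

Lemma Sem_ite_inv G b u v A F : Sem G (tite b u v) A F -> exists G1 G2 fb fu fv,
  ctx_split G G1 G2 /\ Sem G1 b TBool fb /\ Sem G2 u A fu /\ Sem G2 v A fv /\
  forall r, F r = mix (fb r) (fu r) (fv r).
Proof. inversion 1; subst; inj_existT; subst. exists G1, G2, fb, fu, fv; auto. Qed.

Lemma Sem_one_inv G F : Sem G tone TBool F -> forall r, F r = 1.
Proof. inversion 1; subst; inj_existT; subst; auto. Qed.

Lemma Sem_zero_inv G F : Sem G tzero TBool F -> forall r, F r = 0.
Proof. inversion 1; subst; inj_existT; subst; auto. Qed.

Definition sem_reducts G A (f : Env -> sem_ty A) (L : distr) : Prop :=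
  (exists t', L = [(1, t')] /\ Sem G t' A f) \/
  (exists a b fa fb, L = [(/2, a); (/2, b)] /\ Sem G a A fa /\ Sem G b A fb /\
     forall r, f r = mix (/2) (fa r) (fb r)).

Lemma sem_reducts_ext G A f f' L :
  sem_reducts G A f L -> (forall r, f' r = f r) -> sem_reducts G A f' L.
Proof. intros H E. replace f' with f; auto. symmetry. now apply functional_extensionality. Qed.

Lemma sem_reducts_congr G' G A B (F : tm -> tm) (phi : Env -> sem_ty A -> sem_ty B) f L :
  (forall t' f', Sem G' t' A f' -> Sem G (F t') B (fun r => phi r (f' r))) ->
  (forall r l x y, phi r (mix l x y) = mix l (phi r x) (phi r y)) ->
  sem_reducts G' A f L -> sem_reducts G B (fun r => phi r (f r)) (map_tm F L).
Proof.
  intros HF Hphi [(t' & -> & Ht)|(a & b & fa & fb & -> & Ha & Hb & E)].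
  - left. exists (F t'). auto.
  - right. exists (F a), (F b), (fun r => phi r (fa r)), (fun r => phi r (fb r)).
    repeat split; auto. intros r. now rewrite E, Hphi.
Qed.

Lemma sem_reducts_lam G A B f (H : lam_ok A B f) L :
  sem_reducts (Some A :: G) B f L -> sem_reducts G (TArr A B) (lamv A B f H) (map_tm tlam L).
Proof.
  intros [(t' & -> & Ht)|(a & b & fa & fb & -> & Ha & Hb & E)].
  - left. exists (tlam t'). split; auto. now constructor.
  - right. exists (tlam a), (tlam b),
      (lamv A B fa (Sem_lam_ok _ _ _ _ _ Ha)), (lamv A B fb (Sem_lam_ok _ _ _ _ _ Hb)).
    repeat split; try now constructor.
    intros r. apply aff_map_ext. intros v. apply E.
Qed.

Lemma sem_reducts_beta G t u B F :
  Sem G (tapp (tlam t) u) B F -> sem_reducts G B F [(1, subst 0 u t)].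
Proof.
  intros HS. left. exists (subst 0 u t). split; auto.
  destruct (Sem_app_inv _ _ _ _ _ HS) as (G1 & G2 & A & f1 & g & HG & H1 & H2 & E).
  destruct (Sem_lam_inv _ _ _ _ _ H1) as (f0 & HL & H0 & E0).
  eapply Sem_ext; [apply (Sem_subst _ _ _ _ H0 0 A G1 G2 G u g); auto; lia|].
  intros r. now rewrite E, E0.
Qed.

Lemma sem_reducts_if G u v A F (c : bool) :
  Sem G (tite (if c then tone else tzero) u v) A F -> sem_reducts G A F [(1, if c then u else v)].
Proof.
  intros HS. left. eexists; split; [reflexivity|].
  destruct (Sem_ite_inv _ _ _ _ _ _ HS) as (G1 & G2 & fb & fu & fv & HG & Hb & Hu & Hv & E).
  apply (split_ctx_le_r _ _ _) in HG.
  destruct c; eapply Sem_ext; try (eapply Sem_weak; eauto); intros r; rewrite E.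
  - now rewrite (Sem_one_inv _ _ Hb), mix_1.
  - now rewrite (Sem_zero_inv _ _ Hb), mix_0.
Qed.

Lemma sem_reducts_coin G A F : Sem G tcoin A F -> sem_reducts G A F [(/2, tone); (/2, tzero)].
Proof.
  intros HS. assert (A = TBool) as -> by now inversion HS.
  assert (E : forall r, F r = / 2) by (inversion HS; subst; inj_existT; now subst).
  right. exists tone, tzero, (fun _ => 1), (fun _ => 0). repeat split; try constructor.
  intros r. rewrite E. change (/ 2 = / 2 * 1 + (1 - / 2) * 0). field.
Qed.

Lemma sem_step t L : rstep t L -> forall G A f, Sem G t A f -> sem_reducts G A f L.
Proof.
  induction 1; intros G T F HS.
  - now apply sem_reducts_beta.
  - exact (sem_reducts_if _ _ _ _ _ true HS).
  - exact (sem_reducts_if _ _ _ _ _ false HS).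
  - now apply sem_reducts_coin.
  - destruct T as [|A B]; [inversion HS|].
    destruct (Sem_lam_inv _ _ _ _ _ HS) as (f0 & HL & H0 & E).
    eapply sem_reducts_ext; [apply sem_reducts_lam, IHrstep, H0 | exact E].
  - destruct (Sem_app_inv _ _ _ _ _ HS) as (G1 & G2 & A & f & g & HG & Ht & Hu & E).
    eapply sem_reducts_ext; [|exact E].
    refine (sem_reducts_congr _ _ _ _ _ (fun r x => appf x (g r)) _ _ _ _ (IHrstep _ _ _ Ht));
      [intros t' f' Ht'; exact (S_app _ _ _ _ _ _ _ f' g HG Ht' Hu) | reflexivity].
  - destruct (Sem_app_inv _ _ _ _ _ HS) as (G1 & G2 & A & f & g & HG & Ht & Hu & E).
    eapply sem_reducts_ext; [|exact E].
    refine (sem_reducts_congr _ _ _ _ _ (fun r x => appf (f r) x) _ _ _ _ (IHrstep _ _ _ Hu));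
      [intros u' g' Hu'; exact (S_app _ _ _ _ _ _ _ f g' HG Ht Hu') | intros; apply appf_affine].
  - destruct (Sem_ite_inv _ _ _ _ _ _ HS) as (G1 & G2 & fb & fu & fv & HG & Hb & Hu & Hv & E).
    eapply sem_reducts_ext; [|exact E].
    refine (sem_reducts_congr _ _ _ _ _ (fun r (x : sem_ty TBool) => mix x (fu r) (fv r)) _ _ _ _ (IHrstep _ _ _ Hb));
      [intros b' fb' Hb'; exact (S_ite _ _ _ _ _ _ _ fb' fu fv HG Hb' Hu Hv) | intros; apply (mix_mix_weight (sem_ty T))].
  - destruct (Sem_ite_inv _ _ _ _ _ _ HS) as (G1 & G2 & fb & fu & fv & HG & Hb & Hu & Hv & E).
    eapply sem_reducts_ext; [|exact E].
    refine (sem_reducts_congr _ _ _ _ _ (fun r x => mix (fb r) x (fv r)) _ _ _ _ (IHrstep _ _ _ Hu));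
      [intros u' fu' Hu'; exact (S_ite _ _ _ _ _ _ _ fb fu' fv HG Hb Hu' Hv) | intros; apply mix_distr_l].
  - destruct (Sem_ite_inv _ _ _ _ _ _ HS) as (G1 & G2 & fb & fu & fv & HG & Hb & Hu & Hv & E).
    eapply sem_reducts_ext; [|exact E].
    refine (sem_reducts_congr _ _ _ _ _ (fun r x => mix (fb r) (fu r) x) _ _ _ _ (IHrstep _ _ _ Hv));
      [intros v' fv' Hv'; exact (S_ite _ _ _ _ _ _ _ fb fu fv' HG Hb Hu Hv') | intros; apply mix_distr_r].
Qed.

Lemma subject_reduction G t A L : has_type G t A -> rstep t L ->
  Forall (fun pt => has_type G (snd pt) A) L.
Proof.
  intros HT HR. destruct (Sem_exists _ _ _ HT) as [f Hf].
  destruct (sem_step _ _ HR _ _ _ Hf) as [(t' & -> & H)|(a & b & fa & fb & -> & Ha & Hb & _)];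
    repeat constructor; eapply Sem_typed; eauto.
Qed.

Lemma dstar_typed A D D' : dstar D D' -> Forall (fun pt => has_type [] (snd pt) A) D ->
  Forall (fun pt => has_type [] (snd pt) A) D'.
Proof.
  induction 1 as [|D D' D'' [D1 D2 p t L HL] _ IH]; intros HF; auto. apply IH.
  apply Forall_app in HF as [F1 F2]. inversion F2 as [|x l Ht F3]; subst.
  repeat (apply Forall_app; split); auto. apply Forall_map.
  eapply Forall_impl; [|exact (subject_reduction _ _ _ _ Ht HL)]. now intros [a b].
Qed.

(** * Normalization and expected denotations *)

Lemma closed_normalizes t A : has_type [] t A ->
  exists N, reduces t N /\ Forall (fun pt => has_type [] (snd pt) A /\ is_value (snd pt)) N.
Proof.
  revert A; induction t as [t IH] using (Wf_nat.induction_ltof1 _ weight); intros A HT.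
  destruct (progress_weight _ _ HT) as [HV|[L [HL HF]]].
  - exists [(1, t)]. split; [constructor | repeat constructor; auto].
  - pose proof (subject_reduction _ _ _ _ HT HL) as HTL.
    destruct (dstar_pointwise (fun s => has_type [] s A /\ is_value s) (scale 1 L)) as [E [HE HQ]].
    + apply Forall_map. rewrite Forall_forall in HF, HTL |- *.
      intros pt Hin. exact (IH _ (HF _ Hin) _ (HTL _ Hin)).
    + exists E. split; auto. econstructor; [|exact HE].
      rewrite <- (app_nil_r (scale 1 L)). exact (ds_intro [] [] 1 t L HL).
Qed.

Definition bool_nf (t : tm) : Prop := t = tone \/ t = tzero.

Lemma bool_value_nf t : has_type [] t TBool -> is_value t -> bool_nf t.
Proof. intros H HV; destruct t; simpl in HV; try contradiction; [inversion H | left | right]; auto. Qed.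

Lemma bool_nf_normal t : bool_nf t -> normal t.
Proof. intros [-> | ->] p r [L [H _]]; inversion H. Qed.

Lemma nf_expand_exists C A D : elim_ctx_of A C -> Forall (fun pt => has_type [] (snd pt) A) D ->
  exists E, nf_expand C D E /\ Forall (fun pt => bool_nf (snd pt)) E.
Proof.
  intros [_ HC]; induction D as [|[p t] D IH]; intros HF.
  - exists []. split; constructor.
  - inversion HF as [|? ? Ht HD]; subst. destruct (IH HD) as (E & HE & HB).
    destruct (closed_normalizes _ _ (HC t Ht)) as [N [HN HNF]].
    assert (HNB : Forall (fun pt => bool_nf (snd pt)) N).
    { eapply Forall_impl; [|exact HNF]. intros [a b] [X1 X2]. now apply bool_value_nf. }
    exists (scale p N ++ E). split.
    + constructor; auto. eapply Forall_impl; [|exact HNB]. intros [a b]. apply bool_nf_normal.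
    + apply Forall_app; split; auto. now apply Forall_map.
Qed.

Lemma total_nf_expand C D E : nf_expand C D E -> total E = total D.
Proof.
  induction 1; simpl; auto.
  rewrite total_app, total_scale, IHnf_expand, (total_dstar _ _ H). simpl. ring.
Qed.

Lemma mass_bool_nf E : Forall (fun pt => bool_nf (snd pt)) E ->
  mass E tone + mass E tzero = total E /\ forall s, s <> tone -> s <> tzero -> mass E s = 0.
Proof.
  induction E as [|[p t] E IH]; intros HF; simpl; [split; [ring | auto]|].
  inversion HF as [|? ? Ht HE]; subst. destruct (IH HE) as [IH1 IH2]. split.
  - simpl in Ht. destruct Ht as [-> | ->];
      destruct (tm_eq_dec tone tone), (tm_eq_dec tone tzero), (tm_eq_dec tzero tone),
        (tm_eq_dec tzero tzero); try congruence; lra.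
  - intros s N1 N2. rewrite IH2 by auto. destruct (tm_eq_dec t s) as [<-|]; [|ring].
    destruct Ht; subst; contradiction.
Qed.

Lemma dist_sim_bool_nf E1 E2 :
  Forall (fun pt => bool_nf (snd pt)) E1 -> Forall (fun pt => bool_nf (snd pt)) E2 ->
  mass E1 tone = mass E2 tone -> total E1 = total E2 -> dist_sim E1 E2.
Proof.
  intros B1 B2 M T s.
  destruct (mass_bool_nf _ B1) as [M1 Z1], (mass_bool_nf _ B2) as [M2 Z2].
  destruct (tm_eq_dec s tone) as [->|N1]; auto.
  destruct (tm_eq_dec s tzero) as [->|N2]; [lra|]. now rewrite Z1, Z2.
Qed.

(* Closed terms do not look at the environment. *)
Definition env0 : Env := fun _ => existT _ TBool (0 : sem_ty TBool).

Inductive expect : distr -> R -> Prop :=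
| expect_nil : expect [] 0
| expect_cons p t D g x :
    Sem [] t TBool g -> expect D x -> expect ((p, t) :: D) (p * g env0 + x).

Lemma expect_eq D x y : expect D x -> x = y -> expect D y.
Proof. now intros H <-. Qed.

Lemma expect_app D1 D2 x1 x2 : expect D1 x1 -> expect D2 x2 -> expect (D1 ++ D2) (x1 + x2).
Proof.
  induction 1; intros H2; simpl.
  - eapply expect_eq; eauto. ring.
  - eapply expect_eq; [econstructor; eauto | ring].
Qed.

Lemma expect_app_inv D1 D2 x : expect (D1 ++ D2) x ->
  exists x1 x2, expect D1 x1 /\ expect D2 x2 /\ x = x1 + x2.
Proof.
  revert x; induction D1 as [|[p t] D1 IH]; intros x H; simpl in H.
  - exists 0, x. repeat split; auto. constructor. ring.
  - inversion H as [|? ? ? g x' Hg HD]; subst. destruct (IH _ HD) as (x1 & x2 & H1 & H2 & ->).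
    exists (p * g env0 + x1), x2. repeat split; auto. constructor; auto. ring.
Qed.

Lemma expect_scale p D x : expect D x -> expect (scale p D) (p * x).
Proof.
  induction 1; simpl.
  - eapply expect_eq; [constructor | ring].
  - eapply expect_eq; [econstructor; eauto | ring].
Qed.

Lemma expect_dstar D D' x : dstar D D' -> expect D x -> expect D' x.
Proof.
  induction 1 as [|D D' D'' [D1 D2 p t L HL] _ IH]; auto. intros HD. apply IH.
  destruct (expect_app_inv _ _ _ HD) as (x1 & x2 & H1 & H2 & ->).
  inversion H2 as [|? ? ? g x' Hg H2']; subst.
  destruct (sem_step _ _ HL _ _ _ Hg) as [(t' & -> & Ht')|(a & b & fa & fb & -> & Ha & Hb & E)].
  - eapply expect_eq; [apply expect_app; [exact H1 | econstructor; eauto] | simpl; ring].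
  - eapply expect_eq.
    + apply expect_app; [exact H1|]. econstructor; [exact Ha|]. econstructor; [exact Hb | exact H2'].
    + rewrite (E env0). simpl. field.
Qed.

Lemma expect_bool_nf E x : expect E x -> Forall (fun pt => bool_nf (snd pt)) E -> x = mass E tone.
Proof.
  induction 1 as [|p t D g x Hg _ IH]; intros HF; simpl; auto.
  inversion HF as [|? ? Ht HD]; subst. rewrite <- IH by auto.
  simpl in Ht. destruct Ht as [-> | ->].
  - rewrite (Sem_one_inv _ _ Hg). destruct (tm_eq_dec tone tone); [ring | congruence].
  - rewrite (Sem_zero_inv _ _ Hg). destruct (tm_eq_dec tzero tone); [discriminate | ring].
Qed.

Lemma expect_nf_expand C D E x : nf_expand C D E -> expect (map_tm (plug C) D) x -> expect E x.
Proof.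
  intros H; revert x; induction H as [|p t D N E HN _ _ IH]; intros x HD; simpl in HD; auto.
  inversion HD as [|? ? ? g x' Hg HD']; subst.
  assert (X : expect [(1, plug C t)] (1 * g env0 + 0)) by (econstructor; eauto; constructor).
  apply (expect_dstar _ _ _ HN), (expect_scale p) in X.
  eapply expect_eq; [apply expect_app; [exact X | apply IH; eauto] | ring].
Qed.

Lemma nf_expand_mass_tone C t g D E :
  Sem [] (plug C t) TBool g -> reduces t D -> nf_expand C D E ->
  Forall (fun pt => bool_nf (snd pt)) E -> mass E tone = g env0.
Proof.
  intros Hg HD HE HB. symmetry. apply (expect_bool_nf E); auto.
  apply (expect_nf_expand C D); auto.
  apply (expect_dstar _ _ _ (dstar_plug C _ _ HD)). simpl.
  eapply expect_eq; [apply expect_cons; [exact Hg | constructor] | ring].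
Qed.

Theorem theorem1 (t : tm) (A : ty) (D1 D2 : distr) :
  has_type nil t A -> reduces t D1 -> reduces t D2 -> comp_equiv A D1 D2.
Proof.
  intros HT R1 R2.
  assert (HT0 : Forall (fun pt => has_type [] (snd pt) A) [(1, t)]) by (constructor; auto).
  pose proof (dstar_typed _ _ _ R1 HT0) as F1.
  pose proof (dstar_typed _ _ _ R2 HT0) as F2.
  split; [exact F1 | split; [exact F2 |]]. intros C HC.
  destruct (nf_expand_exists _ _ _ HC F1) as (E1 & HE1 & HB1).
  destruct (nf_expand_exists _ _ _ HC F2) as (E2 & HE2 & HB2).
  exists E1, E2. split; [exact HE1 | split; [exact HE2 |]].
  destruct (Sem_exists _ _ _ (proj2 HC t HT)) as [g Hg].
  apply dist_sim_bool_nf; auto.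
  - now rewrite (nf_expand_mass_tone _ _ _ _ _ Hg R1 HE1 HB1), (nf_expand_mass_tone _ _ _ _ _ Hg R2 HE2 HB2).
  - now rewrite (total_nf_expand _ _ _ HE1), (total_nf_expand _ _ _ HE2), (total_dstar _ _ R1),
      (total_dstar _ _ R2).
Qed.
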